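(* Let $\varepsilon>0$ be fixed. Let $G=(V,E)$ be a directed graph with positive integer vertex weights $w:V\to\mathbb{N}$ and root $r\in V$, and let $\kappa$ be the minimum weight of a vertex $r$-cut. Suppose the in-neighborhood of every vertex $v\neq r$ has total weight greater than $(1+\varepsilon)\kappa$. Then the sink component of a minimum vertex $r$-cut has total weight greater than $\varepsilon\kappa$.
   Context: For $S\subseteq V$, $N^-(S)=\{u\in V\setminus S: (u,v)\in E\text{ for some } v\in S\}$; the in-neighborhood of $v$ is $N^-(\{v\})$. A vertex $r$-cut is a set $N^-(S)$ for nonempty $S\subseteq V\setminus\{r\}$ with $r\notin N^-(S)$; $S$ is its sink component and its weight is $\sum_{u\in N^-(S)}w(u)$. *)

From mathcomp Require Import all_boot all_order all_algebra.
Set Implicit Arguments. Unset Strict Implicit. Unset Printing Implicit Defensive.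

Definition in_nbhd (V : finType) (E : rel V) (S : {set V}) : {set V} :=
  [set u | (u \notin S) && [exists v in S, E u v]].

Definition is_rcut_sink (V : finType) (E : rel V) (r : V) (S : {set V}) : bool :=
  [&& S != set0, r \notin S & r \notin in_nbhd E S].

Definition wt (V : finType) (w : V -> nat) (A : {set V}) : nat :=
  \sum_(u in A) w u.

Definition is_min_rcut_weight (V : finType) (E : rel V) (w : V -> nat) (r : V)
  (kappa : nat) : Prop :=
  (exists S, is_rcut_sink E r S /\ wt w (in_nbhd E S) = kappa) /\
  (forall S, is_rcut_sink E r S -> kappa <= wt w (in_nbhd E S)).

From mathcomp Require Import all_boot all_order all_algebra.
From mathcomp Require Import lra.
Import Order.TTheory GRing.Theory Num.Theory.
Local Open Scope ring_scope.

(* For any vertex v of the sink component S, every in-neighbour of v lies in S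
   or in the cut N^-(S); hence (1 + eps) kappa < w(N^-(v)) <= w(S) + kappa. *)

Lemma wt_subset_setU (V : finType) (w : V -> nat) (A B C : {set V}) :
  A \subset B :|: C -> (wt w A <= wt w B + wt w C)%N.
Proof.
move=> sA_BC; rewrite /wt big_mkcond [X in (_ <= X + _)%N]big_mkcond.
rewrite [X in (_ <= _ + X)%N]big_mkcond -big_split /=.
apply: leq_sum => u _; case: ifP => // uA.
by have /setUP[-> | ->] := subsetP sA_BC u uA; rewrite ?leq_addr ?leq_addl.
Qed.

Lemma in_nbhd_subset_setU (V : finType) (E : rel V) (T S : {set V}) :
  T \subset S -> in_nbhd E T \subset S :|: in_nbhd E S.
Proof.
move=> sTS; apply/subsetP => u; rewrite !inE => /andP[_ /existsP[x /andP[xT Eux]]].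
case: (u \in S) => //=; apply/existsP; exists x.
by rewrite (subsetP sTS x xT).
Qed.

Theorem lemma3p1 (R : realFieldType) (eps : R) (V : finType) (E : rel V)
  (w : V -> nat) (r : V) (kappa : nat) :
  0 < eps ->
  (forall v, (0 < w v)%N) ->
  is_min_rcut_weight E w r kappa ->
  (forall v, v != r -> (1 + eps) * kappa%:R < (wt w (in_nbhd E [set v]))%:R) ->
  forall S, is_rcut_sink E r S -> wt w (in_nbhd E S) = kappa ->
    eps * kappa%:R < (wt w S)%:R.
Proof.
move=> _ _ _ heavy_nbhd S /and3P[/set0Pn[v vS] rS _] wt_cut.
have vr : v != r by apply: contraNneq rS => <-.
have sub_nbhd : in_nbhd E [set v] \subset S :|: in_nbhd E S.
  by apply: in_nbhd_subset_setU; rewrite sub1set.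
have : (wt w (in_nbhd E [set v]))%:R <= (wt w S)%:R + kappa%:R :> R.
  by rewrite -natrD ler_nat -wt_cut wt_subset_setU.
have := heavy_nbhd v vr.
lra.
Qed.
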